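(* Let $D_6=\langle\sigma,\tau\mid\sigma^6=\tau^2=1,\ \tau\sigma\tau^{-1}=\sigma^{-1}\rangle$ be the dihedral group of order $12$. Let $C_2^{(1)}=\langle\sigma^3\rangle$, $C_2^{(2)}=\langle\tau\rangle$, $C_2^{(3)}=\langle\sigma\tau\rangle$, $C_3=\langle\sigma^2\rangle$, $V_4=\langle\sigma^3,\tau\rangle$, $C_6=\langle\sigma\rangle$, $S_3^{(1)}=\langle\sigma^2,\tau\rangle$, $S_3^{(2)}=\langle\sigma^2,\sigma\tau\rangle$ (representatives of the conjugacy classes of nontrivial proper subgroups of $D_6$). Then there is an isomorphism of permutation $D_6$-lattices $\mathbb{Z}[D_6]\oplus\mathbb{Z}[D_6/V_4]^{\oplus2}\oplus\mathbb{Z}[D_6/C_6]\oplus\mathbb{Z}[D_6/S_3^{(1)}]\oplus\mathbb{Z}[D_6/S_3^{(2)}]\ \simeq\ \mathbb{Z}[D_6/C_2^{(1)}]\oplus\mathbb{Z}[D_6/C_2^{(2)}]\oplus\mathbb{Z}[D_6/C_2^{(3)}]\oplus\mathbb{Z}[D_6/C_3]\oplus\mathbb{Z}^{\oplus2}.$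
   Context: For a subgroup $H$ of a finite group $G$, $\mathbb{Z}[G/H]$ is the permutation $\mathbb{Z}[G]$-module with $\mathbb{Z}$-basis the left cosets $gH$, permuted by left multiplication; $\mathbb{Z}=\mathbb{Z}[G/G]$ is the trivial module. *)

From HB Require Import structures.
From mathcomp Require Import all_boot all_order all_algebra all_fingroup.
Unset Printing Implicit Defensive.
Import GRing.Theory.
Local Open Scope ring_scope.
Local Open Scope group_scope.

(* A direct sum  Z[G/H_0] (+) ... (+) Z[G/H_{k-1}]  of permutation modules,
   for a list Hs = [:: H_0; ...; H_{k-1}] of subgroups of G, is realized as the
   Z-module of integer-valued functions on the index type ('I_k * {set gT})
   supported on the basis  { (i, xH_i) | x in G }  (left cosets). *)

Definition pidx {gT : finGroupType} (Hs : seq {group gT}) :=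
  ('I_(size Hs) * {set gT})%type.

Definition pbasis {gT : finGroupType} (G : {group gT}) (Hs : seq {group gT})
  : {set pidx Hs} :=
  [set p : pidx Hs | p.2 \in lcosets (nth (1%G : {group gT}) Hs p.1) G].

Definition plat {gT : finGroupType} (G : {group gT}) (Hs : seq {group gT})
  : pred {ffun pidx Hs -> int} :=
  fun f => [forall p, (p \notin pbasis G Hs) ==> (f p == 0%R)].

Definition pact {gT : finGroupType} (Hs : seq {group gT}) (g : gT)
  (f : {ffun pidx Hs -> int}) : {ffun pidx Hs -> int} :=
  [ffun p : pidx Hs => f (p.1, g^-1 *: p.2)].

Definition perm_lattice_iso {gT : finGroupType} (G : {group gT})
  (Hs Ks : seq {group gT}) : Prop :=
  exists phi : {ffun pidx Hs -> int} -> {ffun pidx Ks -> int},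
    [/\ {in plat G Hs &, forall f1 f2, phi (f1 + f2)%R = (phi f1 + phi f2)%R},
        {in plat G Hs, forall f, phi f \in plat G Ks},
        {in plat G Hs &, injective phi},
        {in plat G Ks, forall h, exists2 f, f \in plat G Hs & phi f = h} &
        {in G, forall g, {in plat G Hs, forall f, phi (pact Hs g f) = pact Ks g (phi f)}}].

(* A Z[G]-linear map Z[G/H] -> Z[G/K] is an integer matrix indexed by pairs of cosets
   whose entry at (aH, bK) only depends on the double coset H a^-1 b K.  We write down
   such matrices between the two lattices of the statement and check that they are
   inverse to each other by computing in the model Z/6 x Z/2 of the dihedral group of
   order 12, with which <s, t> is identified because it has order 12. *)

From HB Require Import structures.
From mathcomp Require Import all_boot all_order all_algebra all_fingroup.

Set Implicit Arguments.
Unset Strict Implicit.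
Unset Printing Implicit Defensive.
Import GRing.Theory.
Local Open Scope group_scope.

Section KernelMaps.
Variables (gT : finGroupType) (G : {group gT}).
Implicit Types (Hs Ks : seq {group gT}) (g : gT).

Lemma lcosets_lcoset (H C : {set gT}) g :
  g \in G -> (g *: C \in lcosets H G) = (C \in lcosets H G).
Proof.
move=> Gg; apply/lcosetsP/lcosetsP => [[x Gx defC]|[x Gx ->]].
  exists (g^-1 * x); first by rewrite groupM ?groupV.
  by rewrite lcosetM -defC lcosetK.
by exists (g * x); rewrite ?groupM // lcosetM.
Qed.

Lemma mem_pbasis Hs (i : 'I_(size Hs)) (C : {set gT}) :
  ((i, C) \in pbasis G Hs) = (C \in lcosets (nth 1%G Hs i) G).
Proof. by rewrite inE. Qed.

Definition pshift Hs g (p : pidx Hs) : pidx Hs := (p.1, g *: p.2).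

Lemma pbasis_pshift Hs g (p : pidx Hs) :
  g \in G -> (pshift g p \in pbasis G Hs) = (p \in pbasis G Hs).
Proof. by move=> Gg; rewrite !inE /= lcosets_lcoset. Qed.

Lemma pshiftK Hs g : cancel (@pshift Hs g) (pshift g^-1).
Proof. by case=> i C; rewrite /pshift /= lcosetK. Qed.

Lemma pshiftKV Hs g : cancel (@pshift Hs g^-1) (pshift g).
Proof. by case=> i C; rewrite /pshift /= lcosetKV. Qed.

Lemma pactE Hs g f (p : pidx Hs) : pact Hs g f p = f (pshift g^-1 p).
Proof. by rewrite ffunE. Qed.

Definition kernel_map Hs Ks (k : pidx Hs -> pidx Ks -> int)
    (f : {ffun pidx Hs -> int}) : {ffun pidx Ks -> int} :=
  [ffun q => if q \in pbasis G Ks then (\sum_(p in pbasis G Hs) f p * k p q)%R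
             else 0%R].

Lemma kernel_map_plat Hs Ks k f : @kernel_map Hs Ks k f \in plat G Ks.
Proof. by apply/forallP => q; apply/implyP => /negbTE qNB; rewrite ffunE qNB. Qed.

Lemma kernel_mapD Hs Ks k f1 f2 :
  @kernel_map Hs Ks k (f1 + f2)%R = (kernel_map k f1 + kernel_map k f2)%R.
Proof.
apply/ffunP => q; rewrite !ffunE; case: ifP => _; last by rewrite addr0.
by rewrite -big_split; apply: eq_bigr => p _; rewrite ffunE mulrDl.
Qed.

Lemma kernel_map_pact Hs Ks k g f :
  g \in G -> (forall p q, k (pshift g p) (pshift g q) = k p q) ->
  @kernel_map Hs Ks k (pact Hs g f) = pact Ks g (kernel_map k f).
Proof.
move=> Gg k_inv; apply/ffunP => q; rewrite pactE !ffunE pbasis_pshift ?groupV //.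
case: ifP => // _; rewrite (reindex_inj (can_inj (@pshiftK Hs g))) /=.
apply: eq_big => [p|p _]; first by rewrite pbasis_pshift.
by rewrite pactE pshiftK -{1}(pshiftKV g q) k_inv.
Qed.

Lemma kernel_mapK Hs Ks (M : pidx Hs -> pidx Ks -> int)
    (N : pidx Ks -> pidx Hs -> int) f :
  {in pbasis G Hs &, forall p p',
     (\sum_(q in pbasis G Ks) M p q * N q p')%R = (p == p')%:R%R} ->
  f \in plat G Hs -> kernel_map N (kernel_map M f) = f.
Proof.
move=> MN1 /forallP f0; apply/ffunP => p'; rewrite ffunE.
case: ifP => Bp'; last by have /implyP/(_ (negbT Bp'))/eqP-> := f0 p'.
transitivity (\sum_(q in pbasis G Ks) \sum_(p in pbasis G Hs)
                f p * (M p q * N q p'))%R.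
  by apply: eq_bigr => q Bq; rewrite ffunE Bq big_distrl; apply: eq_bigr => p _; rewrite mulrA.
rewrite exchange_big /= (bigD1 p') //= -big_distrr MN1 // eqxx /= mulr1 big1 ?addr0 //.
by move=> p /andP[Bp /negbTE neq]; rewrite -big_distrr MN1 // neq /= mulr0.
Qed.

Lemma perm_lattice_iso_kernels Hs Ks (M : pidx Hs -> pidx Ks -> int)
    (N : pidx Ks -> pidx Hs -> int) :
  (forall g p q, g \in G -> M (pshift g p) (pshift g q) = M p q) ->
  {in pbasis G Hs &, forall p p',
     (\sum_(q in pbasis G Ks) M p q * N q p')%R = (p == p')%:R%R} ->
  {in pbasis G Ks &, forall q q',
     (\sum_(p in pbasis G Hs) N q p * M p q')%R = (q == q')%:R%R} ->
  perm_lattice_iso G Hs Ks.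
Proof.
move=> M_inv MN1 NM1; exists (kernel_map M); split.
- by move=> f1 f2 _ _; rewrite kernel_mapD.
- by move=> f _; apply: kernel_map_plat.
- by move=> f1 f2 Lf1 Lf2 eqMf; rewrite -(kernel_mapK MN1 Lf1) eqMf kernel_mapK.
- move=> h Lh; exists (kernel_map N h); first exact: kernel_map_plat.
  exact: kernel_mapK.
- by move=> g Gg f _; apply: kernel_map_pact => // p q; apply: M_inv.
Qed.

Lemma sum_pbasis Hs (F : pidx Hs -> int) :
  (\sum_(p in pbasis G Hs) F p
     = \sum_(i < size Hs) \sum_(C in lcosets (nth 1%G Hs i) G) F (i, C))%R.
Proof.
rewrite (pair_big_dep xpredT
  (fun (i : 'I_(size Hs)) (C : {set gT}) => C \in lcosets (nth 1%G Hs i) G)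
  (fun i C => F (i, C))) /=.
by apply: eq_big => [[i C]|[i C] _]; rewrite ?inE.
Qed.

Lemma sum_lcosets_reps (H : {group gT}) (R : seq gT) (F : {set gT} -> int) :
  uniq [seq x *: H | x <- R] -> lcosets H G =i [seq x *: H | x <- R] ->
  (\sum_(C in lcosets H G) F C = \sum_(x <- R) F (x *: H)%g)%R.
Proof.
move=> uniqR defR; rewrite -(big_map (fun x => x *: H) xpredT F) big_uniq //.
by apply: eq_bigl => C; rewrite defR.
Qed.

End KernelMaps.

Section DoubleCosetKernel.
Variable gT : finGroupType.

(* [C^-1 * D] is invariant under left translation of both [C] and [D]; for cosets
   [aH], [bK] it is the double coset [H a^-1 b K]. *)
Definition dcoset_kernel (phi : gT -> int) (C D : {set gT}) : int :=
  phi (repr (C^-1 * D)).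

Lemma dcoset_kernel_lcoset phi g (C D : {set gT}) :
  dcoset_kernel phi (g *: C) (g *: D) = dcoset_kernel phi C D.
Proof.
by rewrite /dcoset_kernel invMg invg_set1 -mulgA (mulgA [set g^-1]) mulg_set1 mulVg lcoset1.
Qed.

Lemma dcoset_kernel_lcosets phi (H K : {group gT}) a b :
  {in H & K, forall h k, phi (h * (a^-1 * b) * k) = phi (a^-1 * b)} ->
  dcoset_kernel phi (a *: H) (b *: K) = phi (a^-1 * b).
Proof.
move=> phi_inv; have : a^-1 * b \in (a *: H)^-1 * (b *: K).
  by rewrite invg_lcoset mem_mulg ?rcoset_refl ?lcoset_refl.
move/mem_repr; rewrite /dcoset_kernel invg_lcoset.
case/mulsgP=> _ _ /rcosetP[h Hh ->] /lcosetP[k Kk ->] ->.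
by rewrite mulgA -(mulgA h) phi_inv.
Qed.

End DoubleCosetKernel.

(* [(a, b)] stands for [s^a t^b]. *)
Definition dih := ('I_6 * bool)%type.

Definition dih1 : dih := (0%R, false).
Definition dih_mul (x y : dih) : dih :=
  ((x.1 + (if x.2 then - y.1 else y.1))%R, x.2 (+) y.2).
Definition dih_inv (x : dih) : dih := (if x.2 then x.1 else (- x.1)%R, x.2).

Definition rot (a : nat) : dih := (inZp a, false).
Definition refl (a : nat) : dih := (inZp a, true).

Definition dih_enum : seq dih := [seq rot a | a <- iota 0 6] ++ [seq refl a | a <- iota 0 6].

Lemma mem_dih_enum x : x \in dih_enum.
Proof.
case: x => a b; rewrite mem_cat; apply/orP; case: b; [right | left];
  by apply/mapP; exists (val a); rewrite ?mem_iota ?ltn_ord // /rot /refl valZpK.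
Qed.

Lemma dih_mulVx x : dih_mul (dih_inv x) x = dih1.
Proof. by case: x => a [] /=; rewrite /dih_mul /= ?addNr ?addrN. Qed.

Definition dih_gen_step (gs S : seq dih) : seq dih :=
  undup (S ++ [seq dih_mul x y | x <- gs, y <- S]).

(* Products of at most 6 generators; closure under products is checked separately. *)
Definition dih_gen (gs : seq dih) : seq dih := iter 6 (dih_gen_step gs) [:: dih1].

Definition dih_subgroup_of (gs S : seq dih) : bool :=
  [&& dih1 \in S, all (mem S) gs & all (fun x => all (fun y => dih_mul x y \in S) S) S].

(* The first element of each left coset [x S] in [dih_enum]. *)
Definition dih_coset_reps (S : seq dih) : seq dih :=
  [seq c <- dih_enum | ~~ has (fun d => dih_mul (dih_inv d) c \in S)
                               (take (index c dih_enum) dih_enum)].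

Definition dih_transversal (S R : seq dih) : bool :=
  [&& uniq R,
      all (fun b => all (fun b' => (dih_mul (dih_inv b) b' \in S) ==> (b == b')) R) R &
      all (fun a => has (fun b => dih_mul (dih_inv b) a \in S) R) dih_enum].

(* Tables list values at [1, s, ..., s^5, t, s t, ..., s^5 t], the order of [dih_enum]. *)
Definition dih_table (tb : seq int) (x : dih) : int := nth 0%R tb (x.1 + 6 * x.2).

Lemma all_iota6P (P : pred nat) : all P (iota 0 6) -> forall i, (i < 6)%N -> P i.
Proof. by move/allP=> allP i lti6; apply: allP; rewrite mem_iota. Qed.

Definition dih_bi_invariant (LS RS : nat -> seq dih) (f : nat -> nat -> dih -> int) :=
  all (fun i => all (fun j => let S := LS i in let T := RS j in
    all (fun u => all (fun v => all (fun d =>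
      f i j (dih_mul (dih_mul u d) v) == f i j d) dih_enum) T) S)
  (iota 0 6)) (iota 0 6).

Lemma dih_bi_invariantP LS RS f i j : dih_bi_invariant LS RS f -> (i < 6)%N -> (j < 6)%N ->
  {in LS i & RS j, forall u v d, f i j (dih_mul (dih_mul u d) v) = f i j d}.
Proof.
move=> f_inv lti6 ltj6 u v Su Tv d.
have /allP/(_ u Su)/allP/(_ v Tv)/allP/(_ d (mem_dih_enum d))/eqP // :=
  all_iota6P (all_iota6P f_inv lti6) ltj6.
Qed.

(* Sums are [foldr]s so that [vm_compute] can evaluate them (big operators are locked),
   and the [let] keeps [vm_compute] from recomputing the representatives [RR j]. *)
Definition dih_kernels_inverse (LS LR RR : nat -> seq dih) (f g : nat -> nat -> dih -> int) :=
  let RRs := map RR (iota 0 6) in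
  all (fun i => all (fun i' => let S := LS i in
    all (fun a => all (fun a' =>
      foldr +%R 0%R [seq foldr +%R 0%R
          [seq f i j (dih_mul (dih_inv a) b) * g j i' (dih_mul (dih_inv b) a')
          | b <- nth [::] RRs j]%R | j <- iota 0 6]
      == ((i == i') && (dih_mul (dih_inv a) a' \in S))%:R%R)
    (LR i')) (LR i)) (iota 0 6)) (iota 0 6).

Lemma dih_kernels_inverseP LS LR RR f g i i' a a' :
  dih_kernels_inverse LS LR RR f g -> (i < 6)%N -> (i' < 6)%N -> a \in LR i -> a' \in LR i' ->
  (\sum_(j < 6) \sum_(b <- RR j)
     f i j (dih_mul (dih_inv a) b) * g j i' (dih_mul (dih_inv b) a'))%R
  = ((i == i') && (dih_mul (dih_inv a) a' \in LS i))%:R%R.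
Proof.
move=> fg1 lti6 lti'6 Ra Ra'.
have /allP/(_ a Ra)/allP/(_ a' Ra')/eqP <- := all_iota6P (all_iota6P fg1 lti6) lti'6.
rewrite foldrE big_map -[X in _ = \big[_/_]_(_ <- X) _]/(index_iota 0 6) big_mkord.
by apply: eq_bigr => j _; rewrite foldrE big_map (nth_map 0%N) ?size_iota ?nth_iota.
Qed.

Section Dihedral12.
Variables (gT : finGroupType) (s t : gT).
Hypotheses (s6 : s ^+ 6 = 1) (t2 : t ^+ 2 = 1) (tst : t * s * t^-1 = s^-1)
  (cardG : #|<<[set s; t]>>| = 12%N).

Local Notation G := <<[set s; t]>>%G.

Definition dih_elt (x : dih) : gT := s ^+ x.1 * t ^+ x.2.

Lemma mul_t_expgs n : t * s ^+ n = (s ^+ n)^-1 * t.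
Proof.
have ts : t * s = s^-1 * t by rewrite -tst mulgKV.
elim: n => [|n IHn]; first by rewrite expg0 invg1 mulg1 mul1g.
by rewrite expgSr mulgA IHn -mulgA ts mulgA -invMg -expgS -expgSr.
Qed.

Lemma expgs_opp (a : 'I_6) : s ^+ (- a)%R = (s ^+ a)^-1.
Proof.
apply/eqP; rewrite eq_sym eq_invg_mul -expgD -(expg_mod _ s6) /= modnDmr.
by rewrite subnKC ?modnn // ltnW.
Qed.

Lemma expgs_add (a b : 'I_6) : s ^+ (a + b)%R = s ^+ a * s ^+ b.
Proof. by rewrite -expgD -[RHS](expg_mod _ s6). Qed.

Lemma dih_elt_mul x y : dih_elt (dih_mul x y) = dih_elt x * dih_elt y.
Proof.
case: x y => [a b] [c d]; rewrite /dih_elt /= expgs_add -!mulgA; congr (_ * _).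
case: b => /=; last by rewrite expg0 mul1g.
rewrite expgs_opp expg1 mulgA mul_t_expgs -mulgA; congr (_ * _).
by case: d; rewrite /= ?expg1 ?expg0 ?mulg1 // -expgS t2.
Qed.

Lemma dih_elt1 : dih_elt dih1 = 1.
Proof. by rewrite /dih_elt /= expg0 mulg1. Qed.

Lemma dih_elt_inv x : dih_elt (dih_inv x) = (dih_elt x)^-1.
Proof. by rewrite -[LHS]mulg1 -(mulgV (dih_elt x)) mulgA -dih_elt_mul dih_mulVx dih_elt1 mul1g. Qed.

Lemma dih_elt_rot a : (a < 6)%N -> dih_elt (rot a) = s ^+ a.
Proof. by move=> lta6; rewrite /dih_elt /= modn_small // mulg1. Qed.

Lemma dih_elt_refl a : (a < 6)%N -> dih_elt (refl a) = s ^+ a * t.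
Proof. by move=> lta6; rewrite /dih_elt /= modn_small. Qed.

Lemma dih_elt_in x : dih_elt x \in G.
Proof. by rewrite groupM ?groupX ?mem_gen // !inE eqxx ?orbT. Qed.

Lemma group_set_dih_elt (P : {pred dih}) :
  dih1 \in P -> {in P &, forall x y, dih_mul x y \in P} ->
  group_set [set dih_elt x | x in P].
Proof.
move=> P1 Pmul; apply/group_setP; split; first by rewrite -dih_elt1 imset_f.
by move=> _ _ /imsetP[x Px ->] /imsetP[y Py ->]; rewrite -dih_elt_mul imset_f ?Pmul.
Qed.

Lemma G_sub_dih_elt : G \subset [set dih_elt x | x in predT].
Proof.
have Dgroup := @group_set_dih_elt predT isT (fun _ _ _ _ => isT).
rewrite -(gen_set_id Dgroup) genS // subUset !sub1set.
have -> : s = dih_elt (rot 1) by rewrite dih_elt_rot ?expg1.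
have -> : t = dih_elt (refl 0) by rewrite dih_elt_refl ?expg0 ?mul1g.
by rewrite !imset_f.
Qed.

Lemma dih_elt_onto g : g \in G -> exists x, g = dih_elt x.
Proof. by move/(subsetP G_sub_dih_elt)/imsetP=> [x _ ->]; exists x. Qed.

Lemma dih_elt_inj : injective dih_elt.
Proof.
suff inj : {in predT &, injective dih_elt} by move=> x y; apply: inj.
apply/imset_injP; rewrite eqn_leq leq_imset_card /= card_prod !card_ord card_bool.
by rewrite (leq_trans _ (subset_leq_card G_sub_dih_elt)) ?cardG.
Qed.

Lemma dih_gen_elt (gs : seq dih) n c :
  c \in iter n (dih_gen_step gs) [:: dih1] ->
  dih_elt c \in <<[set dih_elt x | x in gs]>>.
Proof.
elim: n c => [|n IHn] c /=; first by rewrite inE => /eqP->; rewrite dih_elt1 group1.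
rewrite mem_undup mem_cat => /orP[/IHn // | /allpairsP[[x y] [gs_x /IHn Ay ->]]].
by rewrite dih_elt_mul groupM // mem_gen // imset_f.
Qed.

Lemma gen_dih (A : {set gT}) (gs : seq dih) :
  A =i map dih_elt gs -> dih_subgroup_of gs (dih_gen gs) ->
  <<A>> = [set dih_elt x | x in dih_gen gs].
Proof.
move=> defA /and3P[S1 /allP Sgs /allP Smul].
have Sgroup : group_set [set dih_elt x | x in dih_gen gs].
  by apply: group_set_dih_elt => // x y /Smul/allP; apply.
apply/eqP; rewrite eqEsubset; apply/andP; split.
  rewrite -(gen_set_id Sgroup) genS //.
  by apply/subsetP=> g; rewrite defA => /mapP[x /Sgs S_x ->]; apply: imset_f.
apply/subsetP=> _ /imsetP[x Sx ->].
have := dih_gen_elt Sx; congr (_ \in <<_>>); apply/setP=> g.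
by rewrite defA; apply/imsetP/mapP=> [[x' ? ->]|[x' ? ->]]; exists x'.
Qed.

Section Transversal.
Variables (H : {group gT}) (S R : seq dih).
Hypotheses (defH : H :=: [set dih_elt x | x in S]) (transR : dih_transversal S R).

Lemma mem_dih_elt_sub c : (dih_elt c \in H) = (c \in S).
Proof. by rewrite defH mem_imset //; apply: dih_elt_inj. Qed.

Lemma eq_lcoset_dih a b :
  (dih_elt a *: H == dih_elt b *: H) = (dih_mul (dih_inv a) b \in S).
Proof.
rewrite eq_sym -mem_dih_elt_sub dih_elt_mul dih_elt_inv -mem_lcoset.
by apply/eqP/idP => [<-|/lcoset_eqP//]; apply: lcoset_refl.
Qed.

Lemma lcosets_dih : lcosets H G =i [seq dih_elt b *: H | b <- R].
Proof.
case/and3P: transR => _ _ /allP cover C; apply/lcosetsP/mapP=> [[_ /dih_elt_onto[a ->] ->]|].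
  have /hasP[b Rb Sba] := cover a (mem_dih_enum a).
  by exists b => //; apply/eqP; rewrite eq_sym eq_lcoset_dih.
by case=> b _ ->; exists (dih_elt b); rewrite ?dih_elt_in.
Qed.

Lemma sum_lcosets_dih (F : {set gT} -> int) :
  (\sum_(C in lcosets H G) F C = \sum_(b <- R) F (dih_elt b *: H)%g)%R.
Proof.
case/and3P: transR => uniqR /allP distinct _.
have uniqC : uniq [seq x *: H | x <- map dih_elt R].
  rewrite -map_comp map_inj_in_uniq // => b b' Rb Rb' /eqP; rewrite /= eq_lcoset_dih.
  by move/allP: (distinct b Rb) => /(_ b' Rb') /implyP/[apply]/eqP.
by rewrite (sum_lcosets_reps _ uniqC) ?big_map // => C; rewrite -map_comp lcosets_dih.
Qed.

End Transversal.

Definition lift_dih (f : dih -> int) (g : gT) : int :=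
  if [pick x | dih_elt x == g] is Some x then f x else 0%R.

Lemma lift_dih_elt f x : lift_dih f (dih_elt x) = f x.
Proof. by rewrite /lift_dih; case: pickP => [y /eqP/dih_elt_inj-> | /(_ x)]; rewrite ?eqxx. Qed.

Lemma dcoset_kernel_dih (f : dih -> int) (H K : {group gT}) (S T : seq dih) a b :
  H :=: [set dih_elt x | x in S] -> K :=: [set dih_elt x | x in T] ->
  {in S & T, forall u v d, f (dih_mul (dih_mul u d) v) = f d} ->
  dcoset_kernel (lift_dih f) (dih_elt a *: H) (dih_elt b *: K) = f (dih_mul (dih_inv a) b).
Proof.
move=> defH defK f_inv; rewrite dcoset_kernel_lcosets -dih_elt_inv -dih_elt_mul ?lift_dih_elt //.
move=> h k; rewrite defH defK => /imsetP[u Su ->] /imsetP[v Tv ->].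
by rewrite -!dih_elt_mul !lift_dih_elt f_inv.
Qed.

Definition dih_kernel Ls Rs (f : nat -> nat -> dih -> int) (p : pidx Ls) (q : pidx Rs) : int :=
  dcoset_kernel (lift_dih (f p.1 q.1)) p.2 q.2.

Section KernelProduct.
Variables (Ls Rs : seq {group gT}) (LS LR RS RR : nat -> seq dih) (f g : nat -> nat -> dih -> int).
Hypotheses (sizeLs : size Ls = 6) (sizeRs : size Rs = 6).
Hypotheses (defL : forall i, (i < 6)%N -> nth 1%G Ls i :=: [set dih_elt x | x in LS i])
           (defR : forall j, (j < 6)%N -> nth 1%G Rs j :=: [set dih_elt x | x in RS j]).
Hypotheses (transL : forall i, (i < 6)%N -> dih_transversal (LS i) (LR i))
           (transR : forall j, (j < 6)%N -> dih_transversal (RS j) (RR j)).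
Hypotheses (f_inv : dih_bi_invariant LS RS f) (g_inv : dih_bi_invariant RS LS g)
           (fg1 : dih_kernels_inverse LS LR RR f g).

Lemma dih_kernelK : {in pbasis G Ls &, forall p p',
  (\sum_(q in pbasis G Rs) dih_kernel f p q * dih_kernel g q p')%R = (p == p')%:R%R}.
Proof.
have ltL (i : 'I_(size Ls)) : (i < 6)%N by rewrite -sizeLs.
have ltR (j : 'I_(size Rs)) : (j < 6)%N by rewrite -sizeRs.
move=> [i C] [i' C']; rewrite !mem_pbasis.
rewrite (lcosets_dih (defL (ltL i)) (transL (ltL i))) => /mapP[a La ->].
rewrite (lcosets_dih (defL (ltL i')) (transL (ltL i'))) => /mapP[a' La' ->].
rewrite sum_pbasis.
under eq_bigr => j _ do rewrite (sum_lcosets_dih (defR (ltR j)) (transR (ltR j))).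
under eq_bigr => j _ do under eq_bigr => b _ do rewrite /dih_kernel /=
  (dcoset_kernel_dih _ _ (defL (ltL i)) (defR (ltR j)) (dih_bi_invariantP f_inv (ltL i) (ltR j)))
  (dcoset_kernel_dih _ _ (defR (ltR j)) (defL (ltL i')) (dih_bi_invariantP g_inv (ltR j) (ltL i'))).
rewrite -(big_mkord xpredT (fun j => \sum_(b <- RR j)
   f i j (dih_mul (dih_inv a) b) * g j i' (dih_mul (dih_inv b) a'))%R) sizeRs big_mkord.
rewrite (dih_kernels_inverseP fg1 (ltL i) (ltL i') La La') xpair_eqE.
case: (eqVneq i i') => [<-|neq_ii'].
  by rewrite !eqxx (eq_lcoset_dih (defL (ltL i))).
by rewrite (negbTE (neq_ii' : i != i' :> nat)).
Qed.
End KernelProduct.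

(* The matrix of the isomorphism has entry [dih_table (iso_tab i j) (a^-1 b)] at the
   cosets [(a H_i, b K_j)]; [inv_tab] likewise gives the inverse matrix. *)
Definition iso_tab (i j : nat) : seq int :=
  match i, j with
  | 0, 0 => [:: -1; -1; -1; -1; -1; -1; -2; 0; -2; -2; 0; -2]%Z
  | 0, 1 => [:: 1; -1; 0; 1; -1; 1; 1; -1; 0; 1; -1; 1]%Z
  | 0, 2 => [:: 0; 2; 1; 0; -1; -1; -1; 0; 2; 1; 0; -1]%Z
  | 0, 3 => [:: 2; 1; 2; 1; 2; 1; 1; 1; 1; 1; 1; 1]%Z
  | 0, 4 => [:: 0; 0; 0; 0; 0; 0; 0; 0; 0; 0; 0; 0]%Z
  | 0, 5 => [:: 0; 0; 0; 0; 0; 0; 0; 0; 0; 0; 0; 0]%Z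
  | 1, 0 => [:: -1; 0; -1; -1; 0; -1; -1; -1; 0; -1; -1; 0]%Z
  | 1, 1 => [:: 0; 0; 0; 0; 0; 0; 0; 0; 0; 0; 0; 0]%Z
  | 1, 2 => [:: 0; -1; 0; 0; -1; 0; 0; 0; -1; 0; 0; -1]%Z
  | 1, 3 => [:: 2; 2; 2; 2; 2; 2; 2; 2; 2; 2; 2; 2]%Z
  | 1, 4 => [:: -1; -1; -1; -1; -1; -1; -1; -1; -1; -1; -1; -1]%Z
  | 1, 5 => [:: -2; -2; -2; -2; -2; -2; -2; -2; -2; -2; -2; -2]%Z
  | 2, 0 => [:: -1; 0; -2; -1; 0; -2; -1; -2; 0; -1; -2; 0]%Z
  | 2, 1 => [:: -2; 1; 1; -2; 1; 1; -2; 1; 1; -2; 1; 1]%Z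
  | 2, 2 => [:: 2; -2; 2; 2; -2; 2; 2; 2; -2; 2; 2; -2]%Z
  | 2, 3 => [:: 2; 2; 2; 2; 2; 2; 2; 2; 2; 2; 2; 2]%Z
  | 2, 4 => [:: -1; -1; -1; -1; -1; -1; -1; -1; -1; -1; -1; -1]%Z
  | 2, 5 => [:: -1; -1; -1; -1; -1; -1; -1; -1; -1; -1; -1; -1]%Z
  | 3, 0 => [:: 2; 2; 2; 2; 2; 2; -1; -1; -1; -1; -1; -1]%Z
  | 3, 1 => [:: 1; 1; 1; 1; 1; 1; 1; 1; 1; 1; 1; 1]%Z
  | 3, 2 => [:: -2; -2; -2; -2; -2; -2; -2; -2; -2; -2; -2; -2]%Z
  | 3, 3 => [:: 2; 2; 2; 2; 2; 2; -2; -2; -2; -2; -2; -2]%Z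
  | 3, 4 => [:: -1; -1; -1; -1; -1; -1; -1; -1; -1; -1; -1; -1]%Z
  | 3, 5 => [:: 1; 1; 1; 1; 1; 1; 1; 1; 1; 1; 1; 1]%Z
  | 4, 0 => [:: 0; 0; 0; 0; 0; 0; 0; 0; 0; 0; 0; 0]%Z
  | 4, 1 => [:: 0; -1; 0; -1; 0; -1; 0; -1; 0; -1; 0; -1]%Z
  | 4, 2 => [:: 2; 2; 2; 2; 2; 2; 2; 2; 2; 2; 2; 2]%Z
  | 4, 3 => [:: -1; 0; -1; 0; -1; 0; -1; 0; -1; 0; -1; 0]%Z
  | 4, 4 => [:: 0; 0; 0; 0; 0; 0; 0; 0; 0; 0; 0; 0]%Z
  | 4, 5 => [:: 1; 1; 1; 1; 1; 1; 1; 1; 1; 1; 1; 1]%Z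
  | 5, 0 => [:: -2; -2; -2; -2; -2; -2; -2; -2; -2; -2; -2; -2]%Z
  | 5, 1 => [:: 1; 1; 1; 1; 1; 1; 1; 1; 1; 1; 1; 1]%Z
  | 5, 2 => [:: -1; -2; -1; -2; -1; -2; -2; -1; -2; -1; -2; -1]%Z
  | 5, 3 => [:: 0; 2; 0; 2; 0; 2; 2; 0; 2; 0; 2; 0]%Z
  | 5, 4 => [:: 1; 1; 1; 1; 1; 1; 1; 1; 1; 1; 1; 1]%Z
  | 5, 5 => [:: 2; 2; 2; 2; 2; 2; 2; 2; 2; 2; 2; 2]%Z
  | _, _ => [::]
  end.

Definition inv_tab (j i : nat) : seq int :=
  match j, i with
  | 0, 0 => [:: -29; -34; -26; -29; -34; -26; -27; -25; -33; -27; -25; -33]%Z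
  | 0, 1 => [:: 10; -33; -29; 10; -33; -29; 10; -33; -29; 10; -33; -29]%Z
  | 0, 2 => [:: 64; 74; 73; 64; 74; 73; 64; 74; 73; 64; 74; 73]%Z
  | 0, 3 => [:: -29; -29; -29; -29; -29; -29; -30; -30; -30; -30; -30; -30]%Z
  | 0, 4 => [:: -17; -17; -17; -17; -17; -17; -17; -17; -17; -17; -17; -17]%Z
  | 0, 5 => [:: 50; 50; 50; 50; 50; 50; 50; 50; 50; 50; 50; 50]%Z
  | 1, 0 => [:: 16; 11; 15; 13; 11; 17; 16; 17; 11; 13; 15; 11]%Z
  | 1, 1 => [:: 25; -1; -1; 25; -1; -1; 25; -1; -1; 25; -1; -1]%Z
  | 1, 2 => [:: -37; -31; -31; -37; -31; -31; -37; -31; -31; -37; -31; -31]%Z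
  | 1, 3 => [:: 14; 14; 14; 14; 14; 14; 14; 14; 14; 14; 14; 14]%Z
  | 1, 4 => [:: 8; 7; 8; 7; 8; 7; 8; 7; 8; 7; 8; 7]%Z
  | 1, 5 => [:: -24; -24; -24; -24; -24; -24; -24; -24; -24; -24; -24; -24]%Z
  | 2, 0 => [:: 4; 1; 1; 4; 0; 2; 1; 4; 2; 0; 4; 1]%Z
  | 2, 1 => [:: 7; 7; -11; 7; 7; -11; 7; 7; -11; 7; 7; -11]%Z
  | 2, 2 => [:: -6; -6; -2; -6; -6; -2; -6; -6; -2; -6; -6; -2]%Z
  | 2, 3 => [:: 2; 2; 2; 2; 2; 2; 2; 2; 2; 2; 2; 2]%Z
  | 2, 4 => [:: 1; 1; 1; 1; 1; 1; 1; 1; 1; 1; 1; 1]%Z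
  | 2, 5 => [:: -4; -3; -4; -3; -4; -3; -3; -4; -3; -4; -3; -4]%Z
  | 3, 0 => [:: -43; -43; -43; -43; -43; -43; -44; -45; -44; -45; -44; -45]%Z
  | 3, 1 => [:: -26; -26; -26; -26; -26; -26; -26; -26; -26; -26; -26; -26]%Z
  | 3, 2 => [:: 106; 106; 106; 106; 106; 106; 106; 106; 106; 106; 106; 106]%Z
  | 3, 3 => [:: -45; -45; -45; -45; -45; -45; -44; -44; -44; -44; -44; -44]%Z
  | 3, 4 => [:: -25; -26; -25; -26; -25; -26; -25; -26; -25; -26; -25; -26]%Z
  | 3, 5 => [:: 75; 76; 75; 76; 75; 76; 76; 75; 76; 75; 76; 75]%Z
  | 4, 0 => [:: -98; -98; -98; -98; -98; -98; -98; -98; -98; -98; -98; -98]%Z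
  | 4, 1 => [:: -59; -59; -59; -59; -59; -59; -59; -59; -59; -59; -59; -59]%Z
  | 4, 2 => [:: 238; 238; 238; 238; 238; 238; 238; 238; 238; 238; 238; 238]%Z
  | 4, 3 => [:: -100; -100; -100; -100; -100; -100; -100; -100; -100; -100; -100; -100]%Z
  | 4, 4 => [:: -58; -58; -58; -58; -58; -58; -58; -58; -58; -58; -58; -58]%Z
  | 4, 5 => [:: 169; 169; 169; 169; 169; 169; 169; 169; 169; 169; 169; 169]%Z
  | 5, 0 => [:: -70; -70; -70; -70; -70; -70; -70; -70; -70; -70; -70; -70]%Z
  | 5, 1 => [:: -41; -41; -41; -41; -41; -41; -41; -41; -41; -41; -41; -41]%Z
  | 5, 2 => [:: 169; 169; 169; 169; 169; 169; 169; 169; 169; 169; 169; 169]%Z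
  | 5, 3 => [:: -71; -71; -71; -71; -71; -71; -71; -71; -71; -71; -71; -71]%Z
  | 5, 4 => [:: -40; -40; -40; -40; -40; -40; -40; -40; -40; -40; -40; -40]%Z
  | 5, 5 => [:: 121; 121; 121; 121; 121; 121; 121; 121; 121; 121; 121; 121]%Z
  | _, _ => [::]
  end.


Definition iso_coef i j := dih_table (iso_tab i j).
Definition inv_coef j i := dih_table (inv_tab j i).

Definition Hgens (i : nat) : seq dih :=
  match i with
  | 0 => [::]
  | 1 | 2 => [:: rot 3; refl 0]
  | 3 => [:: rot 1]
  | 4 => [:: rot 2; refl 0]
  | _ => [:: rot 2; refl 1]
  end.

Definition Kgens (j : nat) : seq dih :=
  match j with
  | 0 => [:: rot 3]
  | 1 => [:: refl 0]
  | 2 => [:: refl 1]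
  | 3 => [:: rot 2]
  | _ => [:: rot 1; refl 0]
  end.

Definition Hsub i := dih_gen (Hgens i).
Definition Ksub j := dih_gen (Kgens j).
Definition Hreps i := dih_coset_reps (Hsub i).
Definition Kreps j := dih_coset_reps (Ksub j).

Lemma dih_subgroups :
  all (fun i => dih_subgroup_of (Hgens i) (Hsub i) && dih_subgroup_of (Kgens i) (Ksub i))
      (iota 0 6).
Proof. by vm_compute. Qed.

Lemma dih_transversals :
  all (fun i => dih_transversal (Hsub i) (Hreps i) && dih_transversal (Ksub i) (Kreps i))
      (iota 0 6).
Proof. by vm_compute. Qed.

Lemma iso_coef_bi_invariant : dih_bi_invariant Hsub Ksub iso_coef.
Proof. by vm_compute. Qed.

Lemma inv_coef_bi_invariant : dih_bi_invariant Ksub Hsub inv_coef.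
Proof. by vm_compute. Qed.

Lemma iso_inv_coefs : dih_kernels_inverse Hsub Hreps Kreps iso_coef inv_coef.
Proof. by vm_compute. Qed.

Lemma inv_iso_coefs : dih_kernels_inverse Ksub Kreps Hreps inv_coef iso_coef.
Proof. by vm_compute. Qed.

Definition Hs : seq {group gT} :=
  [:: (1%G : {group gT}); <<[set (s ^+ 3)%g; t]>>%G; <<[set (s ^+ 3)%g; t]>>%G; <[s]>%G;
      <<[set (s ^+ 2)%g; t]>>%G; <<[set (s ^+ 2)%g; (s * t)%g]>>%G].

Definition Ks : seq {group gT} :=
  [:: <[(s ^+ 3)%g]>%G; <[t]>%G; <[(s * t)%g]>%G; <[(s ^+ 2)%g]>%G;
      <<[set s; t]>>%G; <<[set s; t]>>%G].

(* [simpl] must not be let loose on these goals: it would evaluate [dih_gen]. *)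
Lemma Hs_dih i : (i < 6)%N -> nth 1%G Hs i :=: [set dih_elt x | x in Hsub i].
Proof.
move=> lti6; have /andP[subH _] := all_iota6P dih_subgroups lti6.
rewrite /Hsub in subH *.
case: i lti6 subH => [|[|[|[|[|[|i]]]]]] lti6 subH; last by move: lti6; rewrite !ltnS.
all: rewrite [nth _ _ _]/= ?/cycle ?[gval _]/= -?gen0; apply: (gen_dih _ subH) => g.
all: by rewrite [map _ _]/= !inE ?dih_elt_rot ?dih_elt_refl ?expg0 ?expg1 ?mul1g.
Qed.

Lemma Ks_dih j : (j < 6)%N -> nth 1%G Ks j :=: [set dih_elt x | x in Ksub j].
Proof.
move=> ltj6; have /andP[_ subK] := all_iota6P dih_subgroups ltj6.
rewrite /Ksub in subK *.
case: j ltj6 subK => [|[|[|[|[|[|j]]]]]] ltj6 subK; last by move: ltj6; rewrite !ltnS.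
all: rewrite [nth _ _ _]/= ?/cycle; apply: (gen_dih _ subK) => g.
all: by rewrite [map _ _]/= !inE ?dih_elt_rot ?dih_elt_refl ?expg0 ?expg1 ?mul1g.
Qed.

Lemma Hs_transversal i : (i < 6)%N -> dih_transversal (Hsub i) (Hreps i).
Proof. by move/(all_iota6P dih_transversals)/andP=> []. Qed.

Lemma Ks_transversal j : (j < 6)%N -> dih_transversal (Ksub j) (Kreps j).
Proof. by move/(all_iota6P dih_transversals)/andP=> []. Qed.

Lemma D6_perm_lattice_iso : perm_lattice_iso G Hs Ks.
Proof.
apply: (perm_lattice_iso_kernels (M := dih_kernel iso_coef) (N := dih_kernel inv_coef)).
- by move=> g p q _; apply: dcoset_kernel_lcoset.
- exact: (dih_kernelK (Ls := Hs) (Rs := Ks) erefl erefl Hs_dih Ks_dih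
            Hs_transversal Ks_transversal
            iso_coef_bi_invariant inv_coef_bi_invariant iso_inv_coefs).
- exact: (dih_kernelK (Ls := Ks) (Rs := Hs) erefl erefl Ks_dih Hs_dih
            Ks_transversal Hs_transversal
            inv_coef_bi_invariant iso_coef_bi_invariant inv_iso_coefs).
Qed.

End Dihedral12.

Theorem proposition6p7 (gT : finGroupType) (s t : gT)
  (hs : s ^+ 6 = 1) (ht : t ^+ 2 = 1) (hts : t * s * t^-1 = s^-1)
  (hG : #|<<[set s; t]>>| = 12%N) :
  perm_lattice_iso <<[set s; t]>>%G
    [:: (1%G : {group gT}); <<[set (s ^+ 3)%g; t]>>%G; <<[set (s ^+ 3)%g; t]>>%G; <[s]>%G;
        <<[set (s ^+ 2)%g; t]>>%G; <<[set (s ^+ 2)%g; (s * t)%g]>>%G]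
    [:: <[(s ^+ 3)%g]>%G; <[t]>%G; <[(s * t)%g]>%G; <[(s ^+ 2)%g]>%G;
        <<[set s; t]>>%G; <<[set s; t]>>%G].
Proof. exact: D6_perm_lattice_iso hs ht hts hG. Qed.
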